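(* Let $\mathcal{X}$ be a Banach space (complex scalars) and $T \in \mathcal{L}(\mathcal{X})$. Suppose there is a subspace $Y \subset \mathcal{X}$ such that $T|_Y$ is an isomorphism (onto its image) and $d(Y, TY) > 0$. Then for every $\lambda \in \mathbb{C}$, $(T - \lambda I)|_Y$ is an isomorphism and $d(Y, (T - \lambda I)Y) > 0$.
   Context: For subspaces $\mathcal{U}, \mathcal{V}$ of a Banach space, $d(\mathcal{U},\mathcal{V}) = \inf\{\|u - v\| : u \in \mathcal{U}, \|u\|=1, v \in \mathcal{V}\}$. *)

From HB Require Import structures.
From mathcomp Require Import all_boot all_order all_algebra.
From mathcomp Require Import complex.
From mathcomp Require Import all_classical all_reals all_analysis.
Set Implicit Arguments. Unset Strict Implicit. Unset Printing Implicit Defensive.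
Import Order.TTheory GRing.Theory Num.Theory.
Import numFieldNormedType.Exports.
Local Open Scope classical_set_scope.
Local Open Scope ring_scope.

(* Scalars: the complex numbers R[i] over a real field R : realType.
   The norm of a normedModType over R[i] takes values in R[i]
   (nonnegative reals embedded in R[i]); we read its real part. *)

Definition linear_subspace (R : realType) (X : normedModType R[i]) (Y : set X) :=
  Y 0 /\ forall (a : R[i]) (u v : X), Y u -> Y v -> Y (a *: u + v).

Definition closed_subspace (R : realType) (X : normedModType R[i]) (Y : set X) :=
  linear_subspace Y /\ closed Y.

(* S|_Y is an isomorphism onto its image: bounded below on Y
   (hence injective on Y with bounded inverse on S Y). *)
Definition iso_on (R : realType) (X : normedModType R[i]) (S : X -> X) (Y : set X) :=
  exists2 c : R[i], 0 < c & forall y, Y y -> `|y| <= c * `|S y|.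

(* d(U,V) = inf { ||u - v|| : u in U, ||u|| = 1, v in V }  (in \bar R; inf of
   the empty set is +oo). *)
Definition subspace_dist (R : realType) (X : normedModType R[i]) (U V : set X)
  : \bar R :=
  ereal_inf [set x : \bar R | exists u v, [/\ U u, `|u| = 1, V v &
                                           x = (complex.Re `|u - v|)%:E]].

Definition img (R : realType) (X : normedModType R[i]) (S : X -> X) (Y : set X)
  : set X := S @` Y.

From HB Require Import structures.
From mathcomp Require Import all_boot all_order all_algebra.
From mathcomp Require Import complex.
From mathcomp Require Import all_classical all_reals all_analysis.
From mathcomp Require Import lra.
Import Order.TTheory GRing.Theory Num.Theory.
Import numFieldNormedType.Exports.
Local Open Scope classical_set_scope.
Local Open Scope ring_scope.
Local Open Scope complex_scope.

(* Write N := ||T y - w||, with y, w in Y.  Positivity of d(Y, TY) gives, by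
   homogeneity, d ||w|| <= N, and boundedness below of T on Y gives
   m ||y|| <= ||T y|| <= N + ||w||; hence d m ||y|| <= (1 + d) N.  Taking
   w = lambda y shows that T - lambda is bounded below on Y; taking
   w = u + lambda y with ||u|| = 1, and combining with d ||w|| <= N and
   1 <= ||w|| + |lambda| ||y||, bounds ||u - (T - lambda) y|| from below by
   d m / (m + |lambda| (1 + d)). *)

Section RealNorm.
Context {R : realType}.

(* The norms take values in R[i], which is only partially ordered; working
   with their real parts lets lra/nra reason about them. *)
Definition rnorm {V : normedZmodType R[i]} (x : V) : R := complex.Re `|x|.

Context {V : normedZmodType R[i]}.

Lemma normE (x : V) : `|x| = (rnorm x)%:C.
Proof. by rewrite /rnorm RRe_real // normr_real. Qed.

Lemma rnorm_ge0 (x : V) : 0 <= rnorm x.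
Proof. by rewrite -ler0c -normE. Qed.

Lemma rnormD (x y : V) : rnorm (x + y) <= rnorm x + rnorm y.
Proof. by rewrite -lecR rmorphD /= -!normE ler_normD. Qed.

Lemma rnormN (x : V) : rnorm (- x) = rnorm x.
Proof. by rewrite /rnorm normrN. Qed.

Lemma rnormB (x y : V) : rnorm (x - y) = rnorm (y - x).
Proof. by rewrite -rnormN opprB. Qed.

Lemma rnorm_eq1 (x : V) : (`|x| = 1) <-> (rnorm x = 1).
Proof. by rewrite normE; split=> [/(congr1 (@complex.Re R))|->]. Qed.

End RealNorm.

Lemma rnorm_real (R : realType) (r : R) : 0 <= r -> rnorm r%:C = r.
Proof. by move=> r0; rewrite /rnorm ger0_norm ?ler0c. Qed.

Lemma rnormZ (R : realType) (X : normedModType R[i]) (a : R[i]) (x : X) :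
  rnorm (a *: x) = rnorm a * rnorm x.
Proof. by apply: complexI; rewrite rmorphM /= -!normE normrZ. Qed.

Section SubspaceGap.
Context {R : realType} {X : normedModType R[i]}.
Implicit Types (Y : set X) (S : X -> X).

Lemma subspaceZ {Y} a {u} : linear_subspace Y -> Y u -> Y (a *: u).
Proof. by case=> Y0 YD Yu; have := YD a u 0 Yu Y0; rewrite addr0. Qed.

Lemma subspaceD {Y u v} : linear_subspace Y -> Y u -> Y v -> Y (u + v).
Proof. by case=> _ YD Yu Yv; have := YD 1 u v Yu Yv; rewrite scale1r. Qed.

Lemma iso_onP S Y :
  iso_on S Y <-> exists2 m : R, 0 < m & forall y, Y y -> m * rnorm y <= rnorm (S y).
Proof.
split.
- case=> -[a b]; rewrite ltcE /= => /andP[/eqP-> a0] Sbound.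
  exists a^-1 => [|y Yy]; first by rewrite invr_gt0.
  have := Sbound y Yy; rewrite !normE complexr0 -rmorphM lecR.
  by rewrite ler_pdivrMl // mulrC.
- case=> m m0 Sbound; exists (m^-1)%:C => [|y Yy]; first by rewrite ltcR invr_gt0.
  by rewrite !normE -rmorphM lecR ler_pdivlMl //; exact: Sbound.
Qed.

(* The homogeneous form of d(Y, S Y) >= c. *)
Definition dist_lbound S Y (c : R) :=
  forall u y, Y u -> Y y -> c * rnorm u <= rnorm (u - S y).

Lemma subspace_dist_gt0 {S Y c} : 0 < c -> dist_lbound S Y c ->
  (0 < subspace_dist Y (img S Y))%E.
Proof.
move=> c0 Sgap; apply: (@lt_le_trans _ _ c%:E); first by rewrite lte_fin.
apply/ereal_infP => _ [u [_ [Yu /rnorm_eq1 u1 [y Yy <-] ->]]].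
by rewrite lee_fin -[c]mulr1 -u1; exact: Sgap.
Qed.

Lemma subspace_dist_unit_lbound S Y u y : Y u -> rnorm u = 1 -> Y y ->
  (subspace_dist Y (img S Y) <= (rnorm (u - S y))%:E)%E.
Proof.
move=> Yu u1 Yy; apply: ereal_inf_lbound.
by exists u, (S y); split => //; [exact/rnorm_eq1 | exists y].
Qed.

Lemma dist_lbound_of_gt0 {T : {linear X -> X}} {Y} : linear_subspace Y ->
  (0 < subspace_dist Y (img T Y))%E -> exists2 c : R, 0 < c & dist_lbound T Y c.
Proof.
move=> Ysub dist_gt0.
have [c c0 unit_bound] : exists2 c : R, 0 < c &
    forall u y, Y u -> rnorm u = 1 -> Y y -> c <= rnorm (u - T y).
  move: dist_gt0 (@subspace_dist_unit_lbound T Y).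
  case: (subspace_dist Y (img T Y)) => [r| |] // r0 lb; last first.
    by exists 1 => // u y Yu u1 Yy; have := lb u y Yu u1 Yy; rewrite leye_eq.
  by exists r => // u y Yu u1 Yy; rewrite -lee_fin; exact: lb.
exists c => // u y Yu Yy.
have [u0|u_neq0] := eqVneq (rnorm u) 0; first by rewrite u0 mulr0 rnorm_ge0.
have u_gt0 : 0 < rnorm u by rewrite lt_def u_neq0 rnorm_ge0.
pose a : R[i] := ((rnorm u)^-1)%:C.
have := unit_bound (a *: u) (a *: y) (subspaceZ a Ysub Yu) _ (subspaceZ a Ysub Yy).
rewrite linearZ /= -scalerBr !rnormZ rnorm_real ?invr_ge0 ?rnorm_ge0 //.
by rewrite mulVf // => /(_ erefl); rewrite mulrC -ler_pdivlMr // mulrC.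
Qed.

End SubspaceGap.

Section ShiftedOperator.
Context {R : realType} {X : normedModType R[i]}.
Context {T : {linear X -> X}} {Y : set X} {m d : R}.
Hypotheses (Ysub : linear_subspace Y) (m_gt0 : 0 < m) (d_gt0 : 0 < d).
Hypothesis T_lbound : forall y, Y y -> m * rnorm y <= rnorm (T y).
Hypothesis T_gap : dist_lbound T Y d.

Lemma img_sub_lbound {y w} : Y y -> Y w ->
  d * m * rnorm y <= (1 + d) * rnorm (T y - w).
Proof.
move=> Yy Yw.
have w_le : d * rnorm w <= rnorm (T y - w) by rewrite rnormB; exact: T_gap.
have Ty_le : rnorm (T y) <= rnorm (T y - w) + rnorm w.
  by have := rnormD (T y - w) w; rewrite subrK.
have : d * (m * rnorm y) <= d * (rnorm (T y - w) + rnorm w).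
  by rewrite ler_pM2l //; apply: le_trans Ty_le; exact: T_lbound.
lra.
Qed.

Variable lambda : R[i].

Lemma shift_lbound y : Y y ->
  d * m / (1 + d) * rnorm y <= rnorm (T y - lambda *: y).
Proof.
move=> Yy; rewrite mulrAC ler_pdivrMr ?addr_gt0 // [rnorm _ * _]mulrC.
exact: img_sub_lbound Yy (subspaceZ lambda Ysub Yy).
Qed.

Lemma shift_dist_lbound :
  dist_lbound (fun x => T x - lambda *: x) Y
    (d * m / (m + rnorm lambda * (1 + d))).
Proof.
move=> u y Yu Yy; set L := rnorm lambda.
have L_ge0 : 0 <= L := rnorm_ge0 lambda.
rewrite opprB addrA.
set w := u + lambda *: y.
have Yw : Y w := subspaceD Ysub Yu (subspaceZ lambda Ysub Yy).
have y_le := img_sub_lbound Yy Yw.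
have w_le : d * rnorm w <= rnorm (w - T y) := T_gap _ _ Yw Yy.
have u_le : rnorm u <= rnorm w + L * rnorm y.
  by have := rnormD w (- (lambda *: y)); rewrite rnormN rnormZ addrK.
have den_gt0 : 0 < m + L * (1 + d).
  by rewrite ltr_wpDr // mulr_ge0 // addr_ge0 // ltW.
rewrite mulrAC ler_pdivrMr // -/L.
rewrite rnormB in y_le.
have : d * m * rnorm u <= d * m * (rnorm w + L * rnorm y).
  by rewrite ler_wpM2l // mulr_ge0 // ltW.
have : m * (d * rnorm w) <= m * rnorm (w - T y) by rewrite ler_wpM2l // ltW.
have : L * (d * m * rnorm y) <= L * ((1 + d) * rnorm (w - T y)).
  exact: ler_wpM2l.
nra.
Qed.

End ShiftedOperator.

Theorem mainTheorem7 (R : realType) (X : completeNormedModType R[i])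
  (T : {linear X -> X}) (Y : set X) :
  continuous T ->
  closed_subspace Y ->
  iso_on T Y ->
  (0 < subspace_dist Y (img T Y))%E ->
  forall lambda : R[i],
    iso_on (fun x => (T x - lambda *: x)%R) Y /\
    (0 < subspace_dist Y (img (fun x => (T x - lambda *: x)%R) Y))%E.
Proof.
move=> _ [Ysub _] /iso_onP[m m_gt0 T_lbound] dist_gt0 lambda.
have [d d_gt0 T_gap] := dist_lbound_of_gt0 Ysub dist_gt0.
split.
- apply/iso_onP; exists (d * m / (1 + d)).
    by rewrite divr_gt0 ?mulr_gt0 ?addr_gt0.
  exact: shift_lbound Ysub d_gt0 T_lbound T_gap lambda.
- apply: subspace_dist_gt0 (shift_dist_lbound Ysub m_gt0 d_gt0 T_lbound T_gap lambda).
  by rewrite divr_gt0 ?mulr_gt0 // ltr_wpDr // mulr_ge0 ?rnorm_ge0 // addr_ge0 // ltW.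
Qed.
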